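(* Let $G$ be a group and let $(\Gamma,\psi)$ be a $G$-gain graph on $n$ vertices. Let $\alpha=\{C_0,C_1,\dots,C_{2k}\}$ be a $G$-WQH partition of the vertex set of $\Gamma$, let $(\Gamma^\alpha,\psi^\alpha)$ be the gain graph obtained from $(\Gamma,\psi)$ and $\alpha$ as described in the context, and let $Q_\alpha$ be the matrix associated with $\alpha$. Then, with vertices ordered as $C_0,C_1,C_2,\dots,C_{2k}$, $$A_{(\Gamma^\alpha,\psi^\alpha)}=Q_\alpha A_{(\Gamma,\psi)}Q_\alpha.$$ In particular, $(\Gamma,\psi)$ and $(\Gamma^\alpha,\psi^\alpha)$ are $G$-cospectral.
   Context: A $G$-gain graph $(\Gamma,\psi)$ consists of a directed graph $\Gamma=(V,A)$ in which every arc $(u,w)$ has its reverse $(w,u)$ (no loops), and a gain function $\psi:A\to G$ with $\psi(w,u)=\psi(u,w)^{-1}$. Set $\psi(v,w)=0\in\mathbb{C}G$ when $v,w$ are not adjacent. For $V=\{v_1,\dots,v_n\}$, the adjacency matrix $A_{(\Gamma,\psi)}\in M_n(\mathbb{C}G)$ has $(i,j)$ entry $\psi(v_i,v_j)$ if $v_i\sim v_j$ and $0$ otherwise; here $\mathbb{C}G$ is the complex group algebra with neutral element $1_G$. Given a partition $\alpha=\{C_0,C_1,\dots,C_{2k}\}$ of $V$, for a vertex $v$ let $\Psi_i(v)=\sum_{w\in C_i,\,w\sim v}\psi(v,w)\in\mathbb{C}G$. The partition is a $G$-WQH partition if: (1) $|C_i|=|C_{i+1}|$ for every odd $i<2k$;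 (2) for $i,j\in\{1,\dots,2k\}$ and $v,v'\in C_i$, $\Psi_j(v)=\Psi_j(v')$; (3) for odd $i,j<2k$ and $v\in C_i$, $v'\in C_{i+1}$, $\Psi_j(v)=\Psi_{j+1}(v')$ and $\Psi_{j+1}(v)=\Psi_j(v')$; (4) for every $v\in C_0$ and every odd $i<2k$, either (a) $\Psi_i(v)=\Psi_{i+1}(v)$, or (b) $\Psi_i(v)=|C_i|g_1$ and $\Psi_{i+1}(v)=|C_{i+1}|g_2$ for some distinct $g_1,g_2\in G\cup\{0\}\subset\mathbb{C}G$ (i.e. $v$ is joined to all of $C_i$ with gain $g_1$, or to none if $g_1=0$, and likewise to $C_{i+1}$ with $g_2$). The gain graph $(\Gamma^\alpha,\psi^\alpha)$ on the same vertex set is defined by (with $\psi^\alpha(v,w)=0$ meaning non-adjacency): $\psi^\alpha(v,w)=\psi(v,w)$ for $v,w\in C_1\cup\dots\cup C_{2k}$; $\psi^\alpha(v,w)=\psi(v,w)$ for $v,w\in C_0$; for $v\in C_0$ and odd $i<2k$ with $\Psi_i(v)=\Psi_{i+1}(v)$, $\psi^\alpha(v,w)=\psi(v,w)$ for $w\in C_i\cup C_{i+1}$; for $v\in C_0$ and odd $i<2k$ in case (b) with $g_1,g_2$, $\psi^\alpha(v,w)=g_2$ for $w\in C_i$ and $\psi^\alpha(v,w)=g_1$ for $w\in C_{i+1}$ (gains of reversed arcs are the inverses). For $m\ge1$ let $Q_m=\begin{pmatrix} I_m-\frac1m J_m & \frac1m J_m\\ \frac1m J_m & I_m-\frac1m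 J_m\end{pmatrix}\in M_{2m}(\mathbb{C}G)$, where $I_m$ is the identity (diagonal entries $1_G$) and $J_m$ the all-$1_G$ matrix. With $m_t=|C_{2t-1}|=|C_{2t}|$ for $t=1,\dots,k$, define the block-diagonal matrix $Q_\alpha=\mathrm{diag}(I_{|C_0|},Q_{m_1},\dots,Q_{m_k})\in M_n(\mathbb{C}G)$. For $a=\sum_x a_x x\in\mathbb{C}G$, let $\mu(a)$ be the class function on $G$ given by $\mu(a)(g)=\sum_{x\in[g]}a_x$, where $[g]$ is the conjugacy class of $g$. Two matrices $A,B\in M_n(\mathbb{C}G)$ are $G$-cospectral if $\mu(\mathrm{Tr}(A^h))=\mu(\mathrm{Tr}(B^h))$ for every positive integer $h$, where $\mathrm{Tr}$ is the sum of diagonal entries in $\mathbb{C}G$; two $G$-gain graphs are $G$-cospectral if their adjacency matrices are. *)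

From HB Require Import structures.
From mathcomp Require Import all_boot all_order all_algebra.
From mathcomp Require Import finmap.
From mathcomp Require Import xfinmap monalg.
From mathcomp Require Import complex Rstruct boolp.

Set Implicit Arguments.
Unset Strict Implicit.
Unset Printing Implicit Defensive.

Import GRing.Theory.
Local Open Scope fset_scope.
Local Open Scope ring_scope.

Definition Cplx : numClosedFieldType := (Rdefinitions.R)[i].

Section GroupAlgebra.
Variable G : groupType.

Definition grpalg : Type := {malg Cplx[G]}.
HB.instance Definition _ := GRing.Zmodule.on grpalg.

Implicit Types (a b g : grpalg) (c : Cplx).

Definition gaone : grpalg := << (1 : Cplx) *g (1%g : G) >>.

Definition gamul a b : grpalg :=
  \sum_(x <- msupp a) \sum_(y <- msupp b) << a@_x * b@_y *g (x * y)%g >>.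

Lemma gamullw (d1 d2 : {fset G}) a b :
  msupp a `<=` d1 -> msupp b `<=` d2 ->
  gamul a b = \sum_(x <- d1) \sum_(y <- d2) << a@_x * b@_y *g (x * y)%g >>.
Proof.
move=> le_d1 le_d2; rewrite /gamul (big_fset_incl _ le_d1) /=.
  apply/eq_bigr=> k1 _; apply/big_fset_incl => // k _ /mcoeff_outdom ->.
  by rewrite mulr0 monalgU0.
move=> k _ /mcoeff_outdom ak.
by rewrite big1 => // k' _; rewrite ak mul0r monalgU0.
Qed.

Lemma gamulrw (d1 d2 : {fset G}) a b : msupp a `<=` d1 -> msupp b `<=` d2 ->
  gamul a b = \sum_(y <- d2) \sum_(x <- d1) << a@_x * b@_y *g (x * y)%g >>.
Proof. by move=> l1 l2; rewrite (gamullw l1 l2) exchange_big. Qed.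

Lemma gamul0g : left_zero 0 gamul.
Proof. by move=> g; rewrite /gamul msupp0 big_seq_fset0. Qed.

Lemma gamulg0 : right_zero 0 gamul.
Proof.
by move=> g; rewrite /gamul exchange_big /= msupp0 big_seq_fset0.
Qed.

Lemma gamulUg c0 k g :
  gamul << c0 *g k >> g = \sum_(k' <- msupp g) << c0 * g@_k' *g (k * k')%g >>.
Proof.
rewrite (gamullw msuppU_le (fsubset_refl _)) big_seq_fset1.
by apply/eq_bigr => k' _; rewrite mcoeffUU.
Qed.

Lemma gamulgU c0 k g :
  gamul g << c0 *g k >> = \sum_(k' <- msupp g) << g@_k' * c0 *g (k' * k)%g >>.
Proof.
rewrite (gamulrw (fsubset_refl _) msuppU_le) big_seq_fset1.
by apply/eq_bigr=> k' _; rewrite mcoeffUU.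
Qed.

Lemma gamulUU c1 c2 k1 k2 :
  gamul << c1 *g k1 >> << c2 *g k2 >> = << c1 * c2 *g (k1 * k2)%g >>.
Proof. by rewrite (gamulrw msuppU_le msuppU_le) !big_seq_fset1 !mcoeffUU. Qed.

Lemma gamulEl1 a b :
  gamul a b = \sum_(k1 <- msupp a) gamul << a@_k1 *g k1 >> b.
Proof. by apply/eq_bigr=> k _; rewrite gamulUg. Qed.

Lemma gamulEr1 a b :
  gamul a b = \sum_(k2 <- msupp b) gamul a << b@_k2 *g k2 >>.
Proof.
rewrite {1}/gamul exchange_big /=; apply/eq_bigr=> k _.
by rewrite gamulgU.
Qed.

Lemma gamul1g : left_id gaone gamul.
Proof.
move=> g; rewrite /gaone gamulUg [RHS]monalgE.
by apply/eq_bigr=> kg _; rewrite mul1r mul1g.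
Qed.

Lemma gamulg1 : right_id gaone gamul.
Proof.
move=> g; rewrite /gaone gamulgU [RHS]monalgE.
by apply/eq_bigr=> k _; rewrite mulr1 mulg1.
Qed.

Lemma gamulgDl : left_distributive gamul +%R.
Proof.
move=> g1 g2 g; rewrite [in RHS](gamullw (fsubsetUl _ (msupp g2)) (fsubset_refl _)).
rewrite [in RHS](gamullw (fsubsetUr (msupp g1) _) (fsubset_refl _)).
rewrite (gamullw (msuppD_le _ _) (fsubset_refl _)).
rewrite -big_split /=; apply/eq_bigr=> k1 _.
rewrite -big_split /=; apply/eq_bigr=> k2 _.
by rewrite mcoeffD mulrDl monalgUD.
Qed.

Lemma gamulgDr : right_distributive gamul +%R.
Proof.
move=> g g1 g2; rewrite [in RHS](gamulrw (fsubset_refl _) (fsubsetUl _ (msupp g2))).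
rewrite [in RHS](gamulrw (fsubset_refl _) (fsubsetUr (msupp g1) _)).
rewrite (gamulrw (fsubset_refl _) (msuppD_le _ _)).
rewrite -big_split /=; apply/eq_bigr => k1 _.
rewrite -big_split /=; apply/eq_bigr => k2 _.
by rewrite mcoeffD mulrDr monalgUD.
Qed.

Lemma gamulA : associative gamul.
Proof.
move=> g1 g2 g3.
rewrite [RHS](big_morph (gamul^~ _) (fun _ _ => gamulgDl _ _ _) (gamul0g _)).
rewrite gamulEl1; apply/eq_bigr=> k1 _.
rewrite [LHS](big_morph (gamul _) (fun _ _ => gamulgDr _ _ _) (gamulg0 _)).
rewrite [RHS](big_morph (gamul^~ _) (fun _ _ => gamulgDl _ _ _) (gamul0g _)).
apply/eq_bigr=> k2 _.
rewrite [LHS](big_morph (gamul _) (fun _ _ => gamulgDr _ _ _) (gamulg0 _)).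
by rewrite gamulEr1; apply/eq_bigr=> k3 _; rewrite !gamulUU mulrA mulgA.
Qed.

Lemma gaone_neq0 : gaone != 0.
Proof. by apply/eqP/malgP=> /(_ 1%g) /eqP; rewrite !mcoeffsE oner_eq0. Qed.

HB.instance Definition _ := GRing.Zmodule_isNzRing.Build grpalg
  gamulA gamul1g gamulg1 gamulgDl gamulgDr gaone_neq0.

Definition gaC (c : Cplx) : grpalg := << c *g (1%g : G) >>.

Definition gelt (o : option G) : grpalg :=
  if o is Some g then << (1 : Cplx) *g g >> else 0.

Definition mu (a : grpalg) : G -> Cplx :=
  fun z : G => \sum_(x <- msupp a | `[< exists h : G, x = (z ^ h)%g >]) a@_x.

End GroupAlgebra.

Definition G_cospectral (G : groupType) (n : nat) (A B : 'M[grpalg G]_n) : Prop :=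
  forall h : nat, (0 < h)%N -> mu (\tr (A ^+ h)) = mu (\tr (B ^+ h)).

(* G-gain graphs on the vertex set 'I_n.  psi v w = Some g means v ~ w with
   gain g; psi v w = None means v, w not adjacent (gain 0).                  *)
Section GainGraphs.
Variables (G : groupType) (n : nat).
Implicit Types (psi : 'I_n -> 'I_n -> option G).

Definition gain_graph psi : Prop :=
  (forall v, psi v v = None) /\
  (forall v w, psi w v = omap (fun g => (g^-1)%g) (psi v w)).

Definition adjmx psi : 'M[grpalg G]_n := \matrix_(i, j) gelt (psi i j).

(* A partition alpha = {C_0, ..., C_2k} is given by a class map cls :
   C_i = [set v | cls v == i] with cls v <= 2k. *)
Variables (k : nat) (cls : 'I_n -> nat).

Definition csize (i : nat) : nat := #|[set v | cls v == i]|.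

Definition Psi psi (i : nat) (v : 'I_n) : grpalg G :=
  \sum_(w : 'I_n | (cls w == i) && (psi v w != None)) gelt (psi v w).

Definition WQH psi : Prop :=
  (forall i, odd i -> (i < k.*2)%N -> csize i = csize i.+1) /\
  (forall i j v v', (1 <= i <= k.*2)%N -> (1 <= j <= k.*2)%N ->
     cls v = i -> cls v' = i -> Psi psi j v = Psi psi j v') /\
  (forall i j v v', odd i -> (i < k.*2)%N -> odd j -> (j < k.*2)%N ->
     cls v = i -> cls v' = i.+1 ->
     Psi psi j v = Psi psi j.+1 v' /\ Psi psi j.+1 v = Psi psi j v') /\
  (forall v i, cls v = 0%N -> odd i -> (i < k.*2)%N ->
     Psi psi i v = Psi psi i.+1 v \/
     exists g1 g2 : option G, g1 <> g2 /\
       Psi psi i v = gelt g1 *+ csize i /\ Psi psi i.+1 v = gelt g2 *+ csize i.+1).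

Definition alpha_gains psi psia : Prop :=
  (forall v w, psia w v = omap (fun g => (g^-1)%g) (psia v w)) /\
  (forall v w, cls v != 0%N -> cls w != 0%N -> psia v w = psi v w) /\
  (forall v w, cls v = 0%N -> cls w = 0%N -> psia v w = psi v w) /\
  (forall v i w, cls v = 0%N -> odd i -> (i < k.*2)%N ->
     Psi psi i v = Psi psi i.+1 v -> (cls w = i \/ cls w = i.+1) ->
     psia v w = psi v w) /\
  (forall v i (g1 g2 : option G), cls v = 0%N -> odd i -> (i < k.*2)%N ->
     g1 <> g2 -> Psi psi i v = gelt g1 *+ csize i ->
     Psi psi i.+1 v = gelt g2 *+ csize i.+1 ->
     (forall w, cls w = i -> psia v w = g2) /\
     (forall w, cls w = i.+1 -> psia v w = g1)).

(* The matrix Q_alpha = diag(I_{|C_0|}, Q_{m_1}, ..., Q_{m_k}), with the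
   vertices ordered as C_0, C_1, ..., C_2k; the block Q_{m_t} sits on the
   classes C_{2t-1}, C_{2t}. *)
Definition msize (t : nat) : nat := csize (t.*2.-1).

Definition Qalpha : 'M[grpalg G]_n :=
  \matrix_(v, w)
    if (cls v == 0%N) || (cls w == 0%N) then (v == w)%:R
    else if (cls v).+1./2 != (cls w).+1./2 then 0
    else if cls v == cls w then (v == w)%:R - gaC G ((msize (cls v).+1./2)%:R^-1)
    else gaC G ((msize (cls v).+1./2)%:R^-1).

End GainGraphs.

From HB Require Import structures.
From mathcomp Require Import all_boot all_order all_algebra.
From mathcomp Require Import finmap.
From mathcomp Require Import xfinmap monalg.
From mathcomp Require Import complex Rstruct boolp.
From mathcomp Require Import zify ring.

(* Q_alpha = I - P with P = sum_t u_t u_t^T / m_t, where u_t is 1 on C_(2t-1),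
   -1 on C_(2t) and 0 elsewhere.  As u_t^T u_t = 2 m_t, P^2 = 2P, so Q_alpha is
   an involution; its entries are scalars, hence central in CG, so Q A Q is a
   conjugate of A and all traces of powers agree.
   The identity A^alpha = Q A Q is checked coefficientwise: for g in G let A_g
   be the 0/1 matrix of the arcs of gain g.  Conditions (2) and (3) say that,
   outside C_0, A_g u_s is a combination of the u_t; hence P A_g P = 2 A_g P
   = 2 P A_g on (C_0)^c x (C_0)^c and Q A_g Q = A_g there.  On a row of C_0
   only A_g - A_g P survives, and condition (4) makes this exactly the arcs
   of gain g in psi^alpha; the column of C_0 follows by transposition. *)

Set Implicit Arguments.
Unset Strict Implicit.
Unset Printing Implicit Defensive.
Import GRing.Theory Num.Theory.
Local Open Scope ring_scope.

Section GroupAlgebraScalars.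
Variable G : groupType.
Implicit Types (a : grpalg G) (c : Cplx).

Lemma mcoeff_gaCl c a x : (gaC G c * a)@_x = c * a@_x.
Proof.
rewrite -[_ * _]/(gamul _ _) /gaC gamulUg.
have -> : \sum_(k <- msupp a) << c * a@_k *g (1 * k)%g >>
          = c *: (a : {malg Cplx[G]}).
  by rewrite malgZ_def; apply: eq_bigr => y _; rewrite mul1g.
by rewrite mcoeffZ.
Qed.

Lemma mcoeff_gaCr c a x : (a * gaC G c)@_x = a@_x * c.
Proof.
rewrite -[_ * _]/(gamul _ _) /gaC gamulgU.
have -> : \sum_(k <- msupp a) << a@_k * c *g (k * 1)%g >>
          = c *: (a : {malg Cplx[G]}).
  by rewrite malgZ_def; apply: eq_bigr => y _; rewrite mulg1 mulrC.
by rewrite mcoeffZ mulrC.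
Qed.

Lemma gaC_comm c a : GRing.comm (gaC G c) a.
Proof. by apply/malgP => x; rewrite mcoeff_gaCl mcoeff_gaCr mulrC. Qed.

Lemma gaC_is_zmod_morphism : zmod_morphism (gaC G).
Proof. by move=> x y; rewrite /gaC monalgUB. Qed.

Lemma gaC_is_monoid_morphism : monoid_morphism (gaC G).
Proof.
split=> // x y; apply/malgP => z.
by rewrite mcoeff_gaCl /gaC !mcoeffU; case: eqP; rewrite ?mulr0.
Qed.

HB.instance Definition _ :=
  GRing.isZmodMorphism.Build Cplx (grpalg G) (gaC G) gaC_is_zmod_morphism.
HB.instance Definition _ :=
  GRing.isMonoidMorphism.Build Cplx (grpalg G) (gaC G) gaC_is_monoid_morphism.

Lemma mcoeff_gelt (o : option G) x : (gelt o)@_x = (o == Some x)%:R.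
Proof. by case: o => [h|] /=; rewrite ?mcoeffU ?mcoeff0. Qed.

End GroupAlgebraScalars.

Section CoefficientMatrices.
Variable G : groupType.

Definition coefmx (g : G) m p (B : 'M[grpalg G]_(m, p)) : 'M[Cplx]_(m, p) :=
  map_mx (mcoeff g) B.

Lemma coefmxP m p (B C : 'M[grpalg G]_(m, p)) :
  (forall g, coefmx g B = coefmx g C) -> B = C.
Proof.
move=> eqBC; apply/matrixP => i j; apply/malgP => g.
by have /matrixP/(_ i j) := eqBC g; rewrite !mxE.
Qed.

Lemma coefmx_scalar_mull g m p q (X : 'M[Cplx]_(m, p)) (B : 'M_(p, q)) :
  coefmx g (map_mx (gaC G) X *m B) = X *m coefmx g B.
Proof.
apply/matrixP => i j; rewrite !mxE raddf_sum /=.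
by apply: eq_bigr => y _; rewrite !mxE mcoeff_gaCl.
Qed.

Lemma coefmx_scalar_mulr g m p q (B : 'M_(m, p)) (X : 'M[Cplx]_(p, q)) :
  coefmx g (B *m map_mx (gaC G) X) = coefmx g B *m X.
Proof.
apply/matrixP => i j; rewrite !mxE raddf_sum /=.
by apply: eq_bigr => y _; rewrite !mxE mcoeff_gaCr.
Qed.

Variables (n : nat) (psi : 'I_n -> 'I_n -> option G).

Lemma coefmx_adjmx g x y : coefmx g (adjmx psi) x y = (psi x y == Some g)%:R.
Proof. by rewrite !mxE mcoeff_gelt. Qed.

Lemma coefmx_adjmx_tr g :
  (forall v w, psi w v = omap (fun h => (h^-1)%g) (psi v w)) ->
  (coefmx g (adjmx psi))^T = coefmx g^-1 (adjmx psi).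
Proof.
move=> psi_inv; apply/matrixP => x y; rewrite mxE !coefmx_adjmx psi_inv.
case: (psi x y) => [h|] //=; congr (nat_of_bool _)%:R.
by apply/eqP/eqP => [[<-]|[->]]; rewrite invgK.
Qed.

End CoefficientMatrices.

Section InvolutionConjugation.
Variables (R : nzRingType) (m : nat).
Implicit Types Q A X B : 'M[R]_m.

Lemma mxtrace_mulmxC_comm X B :
  (forall i j a, GRing.comm (X i j) a) -> \tr (X *m B) = \tr (B *m X).
Proof.
move=> X_central; rewrite /mxtrace.
under eq_bigr do rewrite mxE.
under [RHS]eq_bigr do rewrite mxE.
rewrite exchange_big; apply: eq_bigr => i _; apply: eq_bigr => j _.
exact: X_central.
Qed.

Lemma exprn_conj_invol Q A h :
  Q *m Q = 1%:M -> (Q *m A *m Q) ^+ h = Q *m A ^+ h *m Q.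
Proof.
move=> QQ; elim: h => [|h IH]; first by rewrite !expr0 mulmx1 QQ.
rewrite exprSr IH exprSr !mulmxE in QQ *.
by rewrite !mulrA -(mulrA _ Q Q) QQ mulr1.
Qed.

Lemma mxtrace_exprn_conj_invol Q A h :
  Q *m Q = 1%:M -> (forall i j a, GRing.comm (Q i j) a) ->
  \tr ((Q *m A *m Q) ^+ h) = \tr (A ^+ h).
Proof.
move=> QQ Q_central; rewrite exprn_conj_invol // -mulmxA.
by rewrite mxtrace_mulmxC_comm // -mulmxA QQ mulmx1.
Qed.

End InvolutionConjugation.

Lemma G_cospectral_conj_invol (G : groupType) m (Q A : 'M[grpalg G]_m) :
  Q *m Q = 1%:M -> (forall i j a, GRing.comm (Q i j) a) ->
  G_cospectral A (Q *m A *m Q).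
Proof. by move=> QQ Q_central h _; rewrite mxtrace_exprn_conj_invol. Qed.

Lemma trmx_mul3 (R : comNzRingType) m p q r
    (X : 'M[R]_(m, p)) (M : 'M_(p, q)) (Y : 'M_(q, r)) :
  (X *m M *m Y)^T = Y^T *m M^T *m X^T.
Proof. by rewrite !trmx_mul mulmxA. Qed.

Section PairedClasses.
Variables (n : nat) (cls : 'I_n -> nat).

(* For x in C_(2t-1) or C_(2t), [lead x] is 2t-1; on C_0 it is 0. *)
Definition lead (x : 'I_n) : nat := ((cls x).+1./2).*2.-1.

Definition in_pair (i : nat) (x : 'I_n) : bool := (cls x == i) || (cls x == i.+1).

Definition pairdiff (i : nat) (x : 'I_n) : Cplx :=
  (cls x == i)%:R - (cls x == i.+1)%:R.

Lemma pairdiff_fst i x : cls x = i -> pairdiff i x = 1.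
Proof. by move=> x_i; rewrite /pairdiff x_i eqxx ltn_eqF // subr0. Qed.

Lemma pairdiff_snd i x : cls x = i.+1 -> pairdiff i x = -1.
Proof. by move=> x_i; rewrite /pairdiff x_i eqxx gtn_eqF // sub0r. Qed.

Lemma pairdiff_out i x : ~~ in_pair i x -> pairdiff i x = 0.
Proof.
rewrite /pairdiff /in_pair negb_or => /andP[/negbTE-> /negbTE->].
by rewrite subrr.
Qed.

Lemma pairdiff_mul i x y : in_pair i x -> in_pair i y ->
  pairdiff i x * pairdiff i y = if cls x == cls y then 1 else -1.
Proof.
move=> /orP[]/eqP x_i /orP[]/eqP y_i.
- by rewrite (pairdiff_fst x_i) (pairdiff_fst y_i) x_i y_i eqxx mulr1.
- by rewrite (pairdiff_fst x_i) (pairdiff_snd y_i) x_i y_i ltn_eqF // mul1r.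
- by rewrite (pairdiff_snd x_i) (pairdiff_fst y_i) x_i y_i gtn_eqF // mulr1.
- by rewrite (pairdiff_snd x_i) (pairdiff_snd y_i) x_i y_i eqxx mulrNN mulr1.
Qed.

Lemma pairdiff_sqr i x : in_pair i x -> pairdiff i x * pairdiff i x = 1.
Proof. by move=> x_i; rewrite pairdiff_mul // eqxx. Qed.

Lemma lead_in_pair x : cls x != 0%N -> odd (lead x) && in_pair (lead x) x.
Proof. by rewrite /lead /in_pair; lia. Qed.

Lemma in_pair_lead i x : odd i -> in_pair i x -> (cls x != 0%N) && (lead x == i).
Proof. by rewrite /lead /in_pair; lia. Qed.

Lemma in_pair_leadC v w : cls v != 0%N -> cls w != 0%N ->
  in_pair (lead v) w = in_pair (lead w) v.
Proof. by rewrite /lead /in_pair; lia. Qed.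

Lemma sum_cls_const j (c : Cplx) : \sum_(y | cls y == j) c = c *+ csize cls j.
Proof. by rewrite -sumr_const; apply: eq_bigl => y; rewrite inE. Qed.

Lemma sum_mul_pairdiff i (f : 'I_n -> Cplx) :
  \sum_y f y * pairdiff i y =
  \sum_(y | cls y == i) f y - \sum_(y | cls y == i.+1) f y.
Proof.
under eq_bigr do rewrite mulrBr !mulr_natr !mulrb.
by rewrite sumrB -!big_mkcond.
Qed.

Lemma sum_pairdiff_antisym i (F : 'I_n -> Cplx) c :
  (forall x, cls x = i -> F x = c) -> (forall x, cls x = i.+1 -> F x = - c) ->
  \sum_x F x * pairdiff i x = c *+ (csize cls i + csize cls i.+1).
Proof.
move=> F_i F_i1; rewrite sum_mul_pairdiff.
rewrite (eq_bigr (fun=> c)) => [|x /eqP]; last exact: F_i.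
rewrite [X in _ - X](eq_bigr (fun=> - c)) => [|x /eqP]; last exact: F_i1.
by rewrite !sum_cls_const mulNrn opprK mulrnDr.
Qed.

Definition Pmx : 'M[Cplx]_n := \matrix_(v, w)
  if cls v == 0%N then 0
  else pairdiff (lead v) v * pairdiff (lead v) w / (csize cls (lead v))%:R.

Definition Qmx : 'M[Cplx]_n := 1%:M - Pmx.

Implicit Type B : 'M[Cplx]_n.

Lemma Pmx_sym v w : Pmx v w = Pmx w v.
Proof.
have out_C0 x y : cls x != 0%N -> cls y = 0%N -> pairdiff (lead x) y = 0.
  move=> x0 y0; have /andP[odd_x _] := lead_in_pair x0.
  by apply: pairdiff_out; apply/negP => /(in_pair_lead odd_x); rewrite y0.
rewrite !mxE.
have [v0|v0] := eqVneq (cls v) 0%N; have [w0|w0] := eqVneq (cls w) 0%N.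
- by [].
- by rewrite (out_C0 w v) ?mulr0 ?mul0r.
- by rewrite (out_C0 v w) ?mulr0 ?mul0r.
have /andP[odd_v _] := lead_in_pair v0.
have [w_v|w_nv] := boolP (in_pair (lead v) w).
  have /andP[_ /eqP->] := in_pair_lead odd_v w_v.
  by rewrite [_ * pairdiff _ w]mulrC.
have v_nw : ~~ in_pair (lead w) v by rewrite -in_pair_leadC.
by rewrite (pairdiff_out w_nv) (pairdiff_out v_nw) !mulr0 !mul0r.
Qed.

Lemma Pmx_tr : Pmx^T = Pmx.
Proof. by apply/matrixP => v w; rewrite mxE Pmx_sym. Qed.

Lemma Qmx_tr : Qmx^T = Qmx.
Proof. by rewrite /Qmx raddfB /= trmx1 Pmx_tr. Qed.

Lemma Qalpha_scalar (G : groupType) : Qalpha G cls = map_mx (gaC G) Qmx.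
Proof.
apply/matrixP => v w; rewrite /Qalpha /Qmx !mxE rmorphB rmorph_nat.
have [v0|v0] := eqVneq (cls v) 0%N; first by rewrite rmorph0 subr0.
have /andP[odd_v v_v] := lead_in_pair v0.
have [w0|w0] := eqVneq (cls w) 0%N.
  have w_nv : ~~ in_pair (lead v) w.
    by apply/negP => /(in_pair_lead odd_v); rewrite w0.
  by rewrite (pairdiff_out w_nv) mulr0 mul0r rmorph0 subr0.
have [w_v|w_nv] := boolP (in_pair (lead v) w); last first.
  have -> : ((cls v).+1./2 != (cls w).+1./2) = true.
    by move: w_nv v0 w0; rewrite /in_pair /lead; lia.
  have [vw|_] := eqVneq v w; first by rewrite -vw v_v in w_nv.
  by rewrite (pairdiff_out w_nv) mulr0 mul0r mulr0n rmorph0 subr0.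
have -> : ((cls v).+1./2 != (cls w).+1./2) = false.
  by move: w_v v0 w0; rewrite /in_pair /lead; lia.
rewrite pairdiff_mul //; have [cvw|cvw] := eqVneq (cls v) (cls w).
  by rewrite mul1r.
have [vw|_] := eqVneq v w; first by rewrite vw eqxx in cvw.
by rewrite mulN1r rmorphN mulr0n sub0r opprK.
Qed.

Lemma conj_QmxE B v w : (Qmx *m B *m Qmx) v w =
  B v w - (Pmx *m B) v w - (B *m Pmx) v w + (Pmx *m B *m Pmx) v w.
Proof.
rewrite /Qmx mulmxBl mul1mx mulmxBr mulmx1 mulmxBl.
move: (Pmx *m B) (B *m Pmx) (Pmx *m B *m Pmx) => PB BP PBP.
by rewrite !mxE; ring.
Qed.

Lemma mulPmx_C0 B v w : cls v = 0%N -> (Pmx *m B) v w = 0.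
Proof. by move=> v0; rewrite mxE big1 // => x _; rewrite mxE v0 eqxx mul0r. Qed.

Lemma mulmxPmx_C0 B v w : cls w = 0%N -> (B *m Pmx) v w = 0.
Proof.
by move=> w0; rewrite mxE big1 // => y _; rewrite Pmx_sym mxE w0 eqxx mulr0.
Qed.

Lemma mulPmxE B v w : cls v != 0%N -> (Pmx *m B) v w =
  pairdiff (lead v) v / (csize cls (lead v))%:R *
  \sum_x B x w * pairdiff (lead v) x.
Proof.
move=> v0; rewrite mxE mulr_sumr; apply: eq_bigr => x _.
by rewrite mxE (negbTE v0); ring.
Qed.

Lemma mulmxPmxE B v w : cls w != 0%N -> (B *m Pmx) v w =
  pairdiff (lead w) w / (csize cls (lead w))%:R *
  \sum_y B v y * pairdiff (lead w) y.
Proof.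
move=> w0; rewrite mxE mulr_sumr; apply: eq_bigr => y _.
by rewrite Pmx_sym mxE (negbTE w0); ring.
Qed.

Variable k : nat.
Hypotheses (cls_le : forall v, (cls v <= k.*2)%N)
  (csize_pair : forall i, odd i -> (i < k.*2)%N -> csize cls i = csize cls i.+1).

Lemma lead_lt v : cls v != 0%N -> (lead v < k.*2)%N.
Proof. by move: (cls_le v); rewrite /lead; lia. Qed.

Lemma csize_lead_neq0 v : cls v != 0%N -> (csize cls (lead v))%:R != 0 :> Cplx.
Proof.
move=> v0; have /andP[odd_v v_v] := lead_in_pair v0; rewrite pnatr_eq0 -lt0n.
case/orP: v_v => /eqP v_i; last rewrite (csize_pair odd_v (lead_lt v0)).
all: by apply/card_gt0P; exists v; rewrite inE v_i.
Qed.

Lemma mulPmx_pair_col B v w : cls v != 0%N ->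
  (forall x, in_pair (lead v) x ->
     B x w = pairdiff (lead v) x * pairdiff (lead v) v * B v w) ->
  (Pmx *m B) v w = B v w *+ 2.
Proof.
move=> v0 B_col; have /andP[odd_v v_v] := lead_in_pair v0.
have m0 := csize_lead_neq0 v0.
rewrite mulPmxE // (sum_pairdiff_antisym (c := pairdiff (lead v) v * B v w)).
- rewrite -(csize_pair odd_v (lead_lt v0)) mulrnAr mulrA.
  rewrite [_ / _ * _]mulrAC pairdiff_sqr // mul1r.
  by rewrite -[LHS]mulr_natr -[RHS]mulr_natr natrD; field.
- move=> x x_i; have x_v : in_pair (lead v) x by rewrite /in_pair x_i eqxx.
  by rewrite B_col // pairdiff_fst // mul1r.
- move=> x x_i; have x_v : in_pair (lead v) x by rewrite /in_pair x_i eqxx orbT.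
  by rewrite B_col // pairdiff_snd // mulN1r mulNr.
Qed.

Lemma Pmx_sqr : Pmx *m Pmx = Pmx *+ 2.
Proof.
apply/matrixP => v w; rewrite mulmxnE.
have [v0|v0] := eqVneq (cls v) 0%N.
  by rewrite mulPmx_C0 // mxE v0 eqxx mul0rn.
have /andP[odd_v v_v] := lead_in_pair v0.
apply: mulPmx_pair_col => // x x_v.
have /andP[x0 /eqP lead_x] := in_pair_lead odd_v x_v.
rewrite !mxE (negbTE x0) (negbTE v0) lead_x -!mulrA; congr (_ * _).
by rewrite mulrA pairdiff_sqr // mul1r.
Qed.

Lemma Qmx_invol : Qmx *m Qmx = 1%:M.
Proof.
by rewrite /Qmx mulmxBl mul1mx mulmxBr mulmx1 Pmx_sqr mulr2n opprB addrK subrK.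
Qed.

End PairedClasses.

Section GainConjugation.
Variables (G : groupType) (n k : nat) (psi psia : 'I_n -> 'I_n -> option G).
Variable cls : 'I_n -> nat.

Local Notation A g := (coefmx g (adjmx psi)).

Lemma mcoeff_Psi g j x :
  (Psi cls psi j x)@_g = \sum_(y | cls y == j) A g x y.
Proof.
rewrite raddf_sum big_mkcond [RHS]big_mkcond; apply: eq_bigr => y _.
rewrite coefmx_adjmx; case: (cls y == j) => //=.
by case: (psi x y) => [h|] //; rewrite mcoeff_gelt.
Qed.

Lemma Psi_const_gain j v (o : option G) y :
  Psi cls psi j v = gelt o *+ csize cls j -> cls y = j -> psi v y = o.
Proof.
move=> Psi_v cls_y; have y_j : cls y == j by rewrite cls_y.
have coef_v h : \sum_(x | cls x == j) A h v x
                = (o == Some h)%:R *+ csize cls j.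
  by rewrite -mcoeff_Psi Psi_v mcoeffMn mcoeff_gelt.
case: o Psi_v coef_v => [h|] _ coef_v.
- have sum0 : \sum_(x | cls x == j) (1 - A h v x) = 0.
    by rewrite sumrB sum_cls_const coef_v eqxx subrr.
  have ge0 x : cls x == j -> 0 <= 1 - A h v x.
    move=> _; rewrite coefmx_adjmx subr_ge0.
    by case: (_ == _); rewrite ?lexx ?ler01.
  move: (psumr_eq0P ge0 sum0 y_j); rewrite coefmx_adjmx.
  by case: eqP => [//|_] /eqP; rewrite subr0 oner_eq0.
- case psi_vy: (psi v y) => [h|] //.
  have ge0 x : cls x == j -> 0 <= A h v x.
    by move=> _; rewrite coefmx_adjmx ler0n.
  move: (psumr_eq0P ge0 (etrans (coef_v h) (mul0rn _ _)) y_j).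
  by rewrite coefmx_adjmx psi_vy eqxx => /eqP; rewrite oner_eq0.
Qed.

Hypotheses
  (psi_inv : forall v w, psi w v = omap (fun g => (g^-1)%g) (psi v w))
  (cls_le : forall v, (cls v <= k.*2)%N)
  (WQH_size : forall i, odd i -> (i < k.*2)%N -> csize cls i = csize cls i.+1)
  (WQH_same : forall i j v v', (1 <= i <= k.*2)%N -> (1 <= j <= k.*2)%N ->
     cls v = i -> cls v' = i -> Psi cls psi j v = Psi cls psi j v')
  (WQH_swap : forall i j v v', odd i -> (i < k.*2)%N -> odd j -> (j < k.*2)%N ->
     cls v = i -> cls v' = i.+1 ->
     Psi cls psi j v = Psi cls psi j.+1 v' /\
     Psi cls psi j.+1 v = Psi cls psi j v')
  (WQH_C0 : forall v i, cls v = 0%N -> odd i -> (i < k.*2)%N ->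
     Psi cls psi i v = Psi cls psi i.+1 v \/
     exists g1 g2 : option G, g1 <> g2 /\
       Psi cls psi i v = gelt g1 *+ csize cls i /\
       Psi cls psi i.+1 v = gelt g2 *+ csize cls i.+1)
  (alpha_inv : forall v w, psia w v = omap (fun g => (g^-1)%g) (psia v w))
  (alpha_off : forall v w, cls v != 0%N -> cls w != 0%N -> psia v w = psi v w)
  (alpha_C0 : forall v w, cls v = 0%N -> cls w = 0%N -> psia v w = psi v w)
  (alpha_eq : forall v i w, cls v = 0%N -> odd i -> (i < k.*2)%N ->
     Psi cls psi i v = Psi cls psi i.+1 v -> (cls w = i \/ cls w = i.+1) ->
     psia v w = psi v w)
  (alpha_swap : forall v i (g1 g2 : option G), cls v = 0%N -> odd i ->
     (i < k.*2)%N -> g1 <> g2 -> Psi cls psi i v = gelt g1 *+ csize cls i ->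
     Psi cls psi i.+1 v = gelt g2 *+ csize cls i.+1 ->
     (forall w, cls w = i -> psia v w = g2) /\
     (forall w, cls w = i.+1 -> psia v w = g1)).

Lemma Psi_diff_pair i j x v :
  odd i -> (i < k.*2)%N -> odd j -> (j < k.*2)%N ->
  in_pair cls i x -> in_pair cls i v ->
  Psi cls psi j x - Psi cls psi j.+1 x =
  if cls x == cls v then Psi cls psi j v - Psi cls psi j.+1 v
  else Psi cls psi j.+1 v - Psi cls psi j v.
Proof.
move=> odd_i i_lt odd_j j_lt x_i v_i.
have same y y' : cls y = cls y' -> in_pair cls i y ->
    Psi cls psi j y = Psi cls psi j y' /\
    Psi cls psi j.+1 y = Psi cls psi j.+1 y'.
  move=> y_y' y_i; have cls_y : (1 <= cls y <= k.*2)%N.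
    by move: y_i; rewrite /in_pair; lia.
  have j_rng : (1 <= j <= k.*2)%N /\ (1 <= j.+1 <= k.*2)%N by lia.
  by split; apply: WQH_same cls_y _ erefl (esym y_y'); case: j_rng.
case/orP: (x_i) => /eqP cx; case/orP: (v_i) => /eqP cv.
- have [-> ->] := same x v (etrans cx (esym cv)) x_i.
  by rewrite cx cv eqxx.
- have [-> ->] := WQH_swap odd_i i_lt odd_j j_lt cx cv.
  by rewrite cx cv ltn_eqF.
- have [-> ->] := WQH_swap odd_i i_lt odd_j j_lt cv cx.
  by rewrite cx cv gtn_eqF.
- have [-> ->] := same x v (etrans cx (esym cv)) x_i.
  by rewrite cx cv eqxx.
Qed.

Lemma coefmx_pairdiff_pair g i j x v :
  odd i -> (i < k.*2)%N -> odd j -> (j < k.*2)%N ->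
  in_pair cls i x -> in_pair cls i v ->
  \sum_y A g x y * pairdiff cls j y =
  pairdiff cls i x * pairdiff cls i v * \sum_y A g v y * pairdiff cls j y.
Proof.
move=> odd_i i_lt odd_j j_lt x_i v_i.
rewrite !sum_mul_pairdiff -!mcoeff_Psi -!mcoeffB.
rewrite (Psi_diff_pair odd_i i_lt odd_j j_lt x_i v_i) pairdiff_mul //.
by case: eqP => _; rewrite ?mul1r // mulN1r -mcoeffN opprB.
Qed.

Lemma trmx_conj_Qmx_coef g :
  (Qmx cls *m A g *m Qmx cls)^T = Qmx cls *m A g^-1 *m Qmx cls.
Proof. by rewrite trmx_mul3 Qmx_tr coefmx_adjmx_tr //. Qed.

Lemma conj_Pmx_coef_r g v w : cls v != 0%N -> cls w != 0%N ->
  (Pmx cls *m A g *m Pmx cls) v w = (A g *m Pmx cls) v w *+ 2.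
Proof.
move=> v0 w0; have /andP[odd_v v_v] := lead_in_pair v0.
have /andP[odd_w _] := lead_in_pair w0.
rewrite -mulmxA (mulPmx_pair_col cls_le WQH_size) // => x x_v.
have [lt_v lt_w] := (lead_lt cls_le v0, lead_lt cls_le w0).
rewrite !mulmxPmxE // (coefmx_pairdiff_pair g odd_v lt_v odd_w lt_w x_v v_v).
by ring.
Qed.

Lemma conj_Pmx_coef_l g v w : cls v != 0%N -> cls w != 0%N ->
  (Pmx cls *m A g *m Pmx cls) v w = (Pmx cls *m A g) v w *+ 2.
Proof.
move=> v0 w0.
transitivity ((Pmx cls *m A g *m Pmx cls)^T w v); first by rewrite [RHS]mxE.
rewrite trmx_mul3 Pmx_tr coefmx_adjmx_tr // conj_Pmx_coef_r //.
by rewrite -[in LHS]coefmx_adjmx_tr // -[in LHS]Pmx_tr -trmx_mul mxE.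
Qed.

Lemma conj_Qmx_coef g v w : cls v != 0%N -> cls w != 0%N ->
  (Qmx cls *m A g *m Qmx cls) v w = A g v w.
Proof.
move=> v0 w0; rewrite conj_QmxE.
have PA_AP : (Pmx cls *m A g) v w = (A g *m Pmx cls) v w.
  apply: (@pmulrnI _ 2) => //.
  by rewrite -conj_Pmx_coef_l // conj_Pmx_coef_r.
by rewrite conj_Pmx_coef_r // PA_AP mulr2n; ring.
Qed.

Lemma coef_alpha_C0row g v w : cls v = 0%N ->
  coefmx g (adjmx psia) v w = (Qmx cls *m A g *m Qmx cls) v w.
Proof.
move=> v0; rewrite conj_QmxE mulPmx_C0 // -mulmxA mulPmx_C0 // subr0 addr0.
have [w0|w0] := eqVneq (cls w) 0%N.
  by rewrite mulmxPmx_C0 // subr0 !coefmx_adjmx alpha_C0.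
have /andP[odd_w w_w] := lead_in_pair w0; have lt_w := lead_lt cls_le w0.
have m0 := csize_lead_neq0 cls_le WQH_size w0.
rewrite mulmxPmxE // sum_mul_pairdiff -!mcoeff_Psi -mcoeffB !coefmx_adjmx.
case: (WQH_C0 v0 odd_w lt_w) => [Psi_eq | [g1 [g2 [g12 [Psi1 Psi2]]]]].
  rewrite Psi_eq subrr mcoeff0 mulr0 subr0 (alpha_eq v0 odd_w lt_w Psi_eq) //.
  by case/orP: w_w => /eqP; [left|right].
have [alpha1 alpha2] := alpha_swap v0 odd_w lt_w g12 Psi1 Psi2.
rewrite Psi1 Psi2 -(WQH_size odd_w lt_w) mcoeffB !mcoeffMn !mcoeff_gelt.
rewrite -mulrnBl -(mulr_natr (_ - _)).
case/orP: w_w => /eqP w_i.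
  rewrite (alpha1 _ w_i) (Psi_const_gain Psi1 w_i) (pairdiff_fst w_i).
  by rewrite mulrCA divfK // mulr1 opprB addrC subrK.
rewrite (alpha2 _ w_i) (Psi_const_gain Psi2 w_i) (pairdiff_snd w_i).
by rewrite mulrCA divfK // mulrN1 opprK addrC subrK.
Qed.

Lemma coef_alpha g : coefmx g (adjmx psia) = Qmx cls *m A g *m Qmx cls.
Proof.
apply/matrixP => v w.
have [v0|v0] := eqVneq (cls v) 0%N; first exact: coef_alpha_C0row.
have [w0|w0] := eqVneq (cls w) 0%N; last first.
  by rewrite conj_Qmx_coef // !coefmx_adjmx alpha_off.
have -> : coefmx g (adjmx psia) v w = coefmx g^-1 (adjmx psia) w v.
  by rewrite -coefmx_adjmx_tr // !mxE.
by rewrite coef_alpha_C0row // -trmx_conj_Qmx_coef // mxE.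
Qed.

End GainConjugation.

Theorem mainTheorem2 (G : groupType) (n k : nat)
    (psi psia : 'I_n -> 'I_n -> option G) (cls : 'I_n -> nat) :
  (* (Gamma, psi) is a G-gain graph on the vertices 'I_n *)
  gain_graph psi ->
  (* alpha = {C_0, ..., C_2k}, C_i = [set v | cls v == i] *)
  (forall v, (cls v <= k.*2)%N) ->
  (* the vertices are ordered as C_0, C_1, ..., C_2k *)
  (forall v w : 'I_n, (v <= w)%N -> (cls v <= cls w)%N) ->
  (* alpha is a G-WQH partition *)
  WQH k cls psi ->
  (* psia is the gain function of (Gamma^alpha, psi^alpha) *)
  alpha_gains k cls psi psia ->
  adjmx psia = Qalpha G cls *m adjmx psi *m Qalpha G cls /\
  G_cospectral (adjmx psi) (adjmx psia).
Proof.
move=> [_ psi_inv] cls_le _ [WQH_size [WQH_same [WQH_swap WQH_C0]]]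
  [alpha_inv [alpha_off [alpha_C0 [alpha_eq alpha_swap]]]].
have Qalpha_invol : Qalpha G cls *m Qalpha G cls = 1%:M.
  by rewrite Qalpha_scalar -map_mxM (Qmx_invol cls_le WQH_size) map_mx1.
have adj_alpha : adjmx psia = Qalpha G cls *m adjmx psi *m Qalpha G cls.
  apply/coefmxP => g.
  rewrite Qalpha_scalar coefmx_scalar_mulr coefmx_scalar_mull.
  exact: (coef_alpha psi_inv cls_le WQH_size WQH_same WQH_swap WQH_C0
            alpha_inv alpha_off alpha_C0 alpha_eq alpha_swap).
split; first exact: adj_alpha.
rewrite adj_alpha; apply: G_cospectral_conj_invol Qalpha_invol _ => i j a.
by rewrite Qalpha_scalar mxE; exact: gaC_comm.
Qed.
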